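(* Let $A=(V,\mathcal E)$ be a finite tree (with at least one vertex). Consider the following three triples $(B,\mathcal R,G)\subset V\times\mathcal E\times V$ (more precisely $B\subseteq V$, $\mathcal R\subseteq \mathcal E$, $G\subseteq V$): (i) $B$ is the positive vertex-backbone of $A$, $\mathcal R$ is the set of exclusive edges of $A$, and $G$ is the negative vertex-backbone of $A$; (ii) $B$ is the set of unavoidable vertices of $A$, $\mathcal R$ is the positive edge-backbone of $A$, and $G$ is the set of optional vertices of $A$; (iii) a tricoloring $(B,\mathcal R,G)$ of $A$ such that: the edges in $\mathcal R$ are pairwise non-adjacent (share no end-vertex); every edge with one end-vertex in $G$ has its other end-vertex in $B$; and each vertex in $B$ is joined to vertices of $G$ by at least two edges. Then the triples defined in (i) and in (ii) are tricolorings of $A$, there is exactly one tricoloring of $A$ satisfying (iii), and these three tricolorings are one and the same.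
   Context: Graphs are simple (no loops, no multiple edges). A vertex cover of $A=(V,\mathcal E)$ is a subset of $V$ containing at least one end-vertex of every edge; a minimal vertex cover is one of smallest cardinality. The positive (resp. negative) vertex-backbone is the set of vertices belonging to every (resp. no) minimal vertex cover; the other vertices are called degenerate. An edge joining two degenerate vertices is called exclusive if no minimal vertex cover contains both of its end-vertices. A matching is a set of pairwise non-adjacent edges; a maximal matching is one of largest cardinality. The positive edge-backbone is the set of edges belonging to every maximal matching. A vertex is optional if there is a maximal matching none of whose edges has it as an end-vertex. A vertex is unavoidable if it is neither optional nor an end-vertex of an edge in the positive edge-backbone. A tricoloring of $A$ is a triple $(B,\mathcal R,G)$ with $B,G\subseteq V$ and $\mathcal R\subseteq\mathcal E$ such that $B$, $G$ and the set of end-vertices of edges in $\mathcal R$ form a partition of $V$ (parts allowed to be empty). *)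

(* A simple graph on a finite vertex type T is a symmetric,
   irreflexive relation e : rel T; an edge is the 2-element set {x, y}. *)
From mathcomp Require Import all_boot.
Set Implicit Arguments. Unset Strict Implicit. Unset Printing Implicit Defensive.

Section Graphs.
Variables (T : finType) (e : rel T).

Definition edges : {set {set T}} :=
  [set [set x; y] | x in T, y in T & e x y].

Definition connected_graph : Prop := forall x y : T, connect e x y.
Definition acyclic_graph : Prop :=
  forall s : seq T, uniq s -> 3 <= size s -> ~~ cycle e s.
Definition is_tree : Prop := 0 < #|T| /\ connected_graph /\ acyclic_graph.

(* Vertex covers and minimal (= minimum cardinality) vertex covers. *)
Definition vertex_cover (C : {set T}) : bool :=
  [forall f in edges, [exists v in f, v \in C]].
Definition min_vertex_cover (C : {set T}) : bool :=
  vertex_cover C && [forall C' : {set T}, vertex_cover C' ==> (#|C| <= #|C'|)].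

Definition pos_vertex_backbone : {set T} :=
  [set v | [forall C : {set T}, min_vertex_cover C ==> (v \in C)]].
Definition neg_vertex_backbone : {set T} :=
  [set v | [forall C : {set T}, min_vertex_cover C ==> (v \notin C)]].
Definition degenerate (v : T) : bool :=
  (v \notin pos_vertex_backbone) && (v \notin neg_vertex_backbone).
Definition exclusive_edges : {set {set T}} :=
  [set f in edges | [forall v in f, degenerate v] &&
                    [forall C : {set T}, min_vertex_cover C ==> ~~ (f \subset C)]].

(* Matchings and maximal (= maximum cardinality) matchings. *)
Definition matching (M : {set {set T}}) : bool :=
  (M \subset edges) &&
  [forall f in M, forall g in M, (f != g) ==> [disjoint f & g]].
Definition max_matching (M : {set {set T}}) : bool :=
  matching M && [forall M' : {set {set T}}, matching M' ==> (#|M'| <= #|M|)].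

Definition pos_edge_backbone : {set {set T}} :=
  [set f in edges | [forall M : {set {set T}}, max_matching M ==> (f \in M)]].
Definition optional (v : T) : bool :=
  [exists M : {set {set T}}, max_matching M && [forall f in M, v \notin f]].
Definition optional_vertices : {set T} := [set v | optional v].
Definition unavoidable_vertices : {set T} :=
  [set v | ~~ optional v && ~~ [exists f in pos_edge_backbone, v \in f]].

Definition ends (R : {set {set T}}) : {set T} := \bigcup_(f in R) f.
Definition tricoloring (B : {set T}) (R : {set {set T}}) (G : {set T}) : Prop :=
  R \subset edges /\ [disjoint B & G] /\ [disjoint B & ends R] /\
  [disjoint G & ends R] /\ B :|: ends R :|: G = [set: T].

Definition cond_iii (B : {set T}) (R : {set {set T}}) (G : {set T}) : Prop :=
  (forall f g, f \in R -> g \in R -> f != g -> [disjoint f & g]) /\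
  (forall x y, e x y -> x \in G -> y \in B) /\
  (forall b, b \in B -> 2 <= #|[set y in G | e b y]|).

End Graphs.

From mathcomp Require Import all_boot zify.
Set Implicit Arguments. Unset Strict Implicit. Unset Printing Implicit Defensive.

(* Stripping leaves builds a tricoloring (B, R, G) satisfying (iii): an isolated
   leaf becomes green; a leaf l hanging at p makes p blue and l green if p
   already has a green neighbour, and makes lp a red edge otherwise.
   Now root the forest.  Every blue vertex has a green child, so R plus an edge
   from each blue vertex to a green child is a matching of size |B| + |R|, and
   B plus the upper ends of the red edges is a vertex cover of that size.  So
   maximum matchings and minimum covers are tight: every vertex of a minimum
   cover is matched by every maximum matching, each edge of which has exactly
   one end in the cover.  Rooting at a green vertex leaves it unmatched, and
   rooting at an end of a red edge puts it in the cover; hence B, G and the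
   ends of R are the vertices lying in all, no and some minimum covers, and G
   is the set of vertices missed by some maximum matching.  Finally R lies in
   every maximum matching, since a forest has at most one perfect matching on
   a given vertex set. *)

Lemma disjointsU (T : finType) (A B C : {set T}) :
  [disjoint A :|: B & C] = [disjoint A & C] && [disjoint B & C].
Proof. by rewrite -!setI_eq0 setIUl setU_eq0. Qed.

Lemma cover_setU1 (T : finType) (P : {set {set T}}) A : cover (A |: P) = A :|: cover P.
Proof. by rewrite /cover bigcup_setU big_set1. Qed.

Lemma card_cover_setI (T : finType) (P : {set {set T}}) (A : {set T}) :
  trivIset P -> #|cover P :&: A| = \sum_(X in P) #|X :&: A|.
Proof.
move=> trivP; rewrite -sum1_card.
rewrite (eq_bigl (fun x => (x \in cover P) && (x \in A))) => [|x]; last by rewrite inE.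
rewrite (big_trivIset_cond P) //; apply: eq_bigr => X _.
by rewrite -sum1_card; apply: eq_bigl => x; rewrite inE.
Qed.

(** * Matchings and vertex covers *)

Section Graph.
Variables (T : finType) (e : rel T).
Hypothesis e_sym : symmetric e.

Definition nbrs (S : {set T}) x := [set y in S | e x y].

Lemma edge_nbrs (S : {set T}) x y : y \in S -> e x y = (y \in nbrs S x).
Proof. by rewrite inE => ->. Qed.

Lemma nbrsS (A A' : {set T}) x : A \subset A' -> nbrs A x \subset nbrs A' x.
Proof. by move/subsetP=> sAA'; apply/subsetP => y; rewrite !inE => /andP[/sAA' -> ->]. Qed.

Lemma mem_edges x y : e x y -> [set x; y] \in edges e.
Proof. by move=> exy; apply/imset2P; exists x y; rewrite ?inE. Qed.

Lemma edgesP f : reflect (exists x y, e x y /\ f = [set x; y]) (f \in edges e).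
Proof.
apply: (iffP imset2P) => [[x y _]|[x [y [exy ->]]]]; last by exists x y; rewrite ?inE.
by rewrite inE => exy ->; exists x, y.
Qed.

Lemma edge_other f w : f \in edges e -> w \in f -> exists2 z, e w z & f = [set w; z].
Proof.
case/edgesP=> x [y [exy ->]]; rewrite !inE => /orP[]/eqP->; first by exists y.
by exists x; rewrite 1?e_sym // setUC.
Qed.

Lemma vertex_coverP (C : {set T}) :
  reflect (forall x y, e x y -> (x \in C) || (y \in C)) (vertex_cover e C).
Proof.
apply: (iffP forall_inP) => [coverC x y exy | coverC f /edgesP[x [y [exy ->]]]].
  case/exists_inP: (coverC _ (mem_edges exy)) => v.
  by rewrite !inE => /orP[]/eqP-> ->; rewrite ?orbT.
apply/exists_inP; case/orP: (coverC x y exy) => ?; [exists x | exists y];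
  by rewrite ?inE ?eqxx ?orbT.
Qed.

Lemma matchingE (M : {set {set T}}) : matching e M = (M \subset edges e) && trivIset M.
Proof.
congr (_ && _); apply/forall_inP/trivIsetP => [disjM f g fM gM | disjM f fM].
  by move/forall_inP/(_ g gM)/implyP: (disjM f fM).
by apply/forall_inP => g gM; apply/implyP; apply: disjM.
Qed.

Lemma matching_edges M : matching e M -> M \subset edges e.
Proof. by rewrite matchingE => /andP[]. Qed.

Lemma matching_trivIset M : matching e M -> trivIset M.
Proof. by rewrite matchingE => /andP[]. Qed.

Lemma matching_edge_eq M f g x :
  matching e M -> f \in M -> g \in M -> x \in f -> x \in g -> f = g.
Proof.
move/matching_trivIset/trivIsetP => disjM fM gM xf xg.
by apply: contraTeq isT => /(disjM f g fM gM)/disjointFr/(_ xf); rewrite xg.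
Qed.

Lemma min_vertex_coverP (C : {set T}) : reflect
  (vertex_cover e C /\ forall C', vertex_cover e C' -> #|C| <= #|C'|)
  (min_vertex_cover e C).
Proof.
apply: (iffP andP) => -[coverC minC]; split=> //.
  by move=> C' /(implyP (forallP minC C')).
by apply/forallP => C'; apply/implyP/minC.
Qed.

Lemma max_matchingP (M : {set {set T}}) : reflect
  (matching e M /\ forall M', matching e M' -> #|M'| <= #|M|)
  (max_matching e M).
Proof.
apply: (iffP andP) => -[matchM maxM]; split=> //.
  by move=> M' /(implyP (forallP maxM M')).
by apply/forallP => M'; apply/implyP/maxM.
Qed.

Section Duality.
Variables (M : {set {set T}}) (C : {set T}).
Hypotheses (matchM : matching e M) (coverC : vertex_cover e C).

Lemma edge_meets_cover f : f \in M -> 0 < #|f :&: C|.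
Proof.
move/(subsetP (matching_edges matchM))/edgesP => [x [y [exy ->]]].
apply/card_gt0P; move/vertex_coverP/(_ x y exy): coverC => /orP[] ?;
  [exists x | exists y]; by rewrite !inE eqxx ?orbT.
Qed.

Lemma card_matching_le_cover : #|M| <= #|C|.
Proof.
have trivM := matching_trivIset matchM.
rewrite -sum1_card (@leq_trans (\sum_(f in M) #|f :&: C|)) //.
  exact: leq_sum edge_meets_cover.
by rewrite -card_cover_setI // subset_leq_card ?subsetIr.
Qed.

Lemma tight_matching_cover : #|C| <= #|M| ->
  C \subset cover M /\ {in M, forall f, #|f :&: C| = 1}.
Proof.
move=> le_CM; have trivM := matching_trivIset matchM.
have one_le f : f \in M -> 1 <= #|f :&: C| ?= iff (1 == #|f :&: C|).
  by move/edge_meets_cover; apply: leqif_eq.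
have le_M_IC := leqif_sum one_le; rewrite sum1_card -card_cover_setI // in le_M_IC.
have le_IC := subset_leqif_card (subsetIr (cover M) C).
have eqC : #|C| = #|cover M :&: C|.
  by apply/eqP; rewrite eqn_leq le_IC (leq_trans le_CM) ?le_M_IC.
split; first by move/esym/eqP: eqC; rewrite le_IC => /subset_trans; apply; apply: subsetIl.
have /eqP : #|M| = #|cover M :&: C| by apply/eqP; rewrite eqn_leq le_M_IC -eqC.
by rewrite le_M_IC => /forall_inP one_end f /one_end/eqP.
Qed.

End Duality.
End Graph.

(** * Leaves and rootings of forests *)

Section Forest.
Variables (T : finType) (e : rel T).
Hypotheses (e_sym : symmetric e) (e_irr : irreflexive e) (e_acyclic : acyclic_graph e).

Lemma path_head_nonadj x a s y :
  path e x (a :: s) -> uniq (x :: a :: s) -> y \in s -> ~~ e x y.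
Proof.
move=> path_xs uniq_xs /splitPr s_split; apply/negP => exy.
case: s_split path_xs uniq_xs => p1 p2 path_xs uniq_xs.
have uniq_cyc : uniq (x :: a :: rcons p1 y).
  have : uniq ((x :: a :: rcons p1 y) ++ p2) by rewrite -cats1 /= -catA.
  by rewrite cat_uniq => /andP[].
apply: (negP (e_acyclic uniq_cyc _)); first by rewrite /= size_rcons.
rewrite /cycle -rcons_cons rcons_path last_rcons e_sym exy andbT /= rcons_path.
by move: path_xs; rewrite /= cat_path /= => /and3P[-> -> /andP[-> _]].
Qed.

(* Extend the path at its head as long as possible. *)
Lemma leaf_at_path_end (S : {set T}) x s :
  path e x s -> uniq (x :: s) -> {subset x :: s <= S} ->
  exists2 l, l \in S & #|nbrs e S l| <= (l != last x s).
Proof.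
have [m] : exists m, #|T| - size s < m by exists (#|T| - size s).+1.
elim: m x s => // m IH x s lt_m path_xs uniq_xs sub_S.
have xS : x \in S by apply: sub_S; rewrite mem_head.
have [/exists_inP[y] | no_ext] := boolP [exists y in nbrs e S x, y \notin x :: s].
  rewrite inE => /andP[yS exy] y_new.
  have uniq_yxs : uniq (y :: x :: s) by rewrite /= y_new.
  apply: (IH y (x :: s)) => //=; last by move=> z; rewrite inE => /predU1P[-> | /sub_S].
  - have : size (y :: x :: s) <= #|T| by rewrite -(card_uniqP uniq_yxs) max_card.
    by move: lt_m; rewrite /=; lia.
  - by rewrite e_sym exy.
exists x => //.
have nbr_in_s y : y \in nbrs e S x -> y \in s.
  move=> y_nbr; have : y \in x :: s.
    by apply: contraR no_ext => y_new; apply/exists_inP; exists y.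
  by rewrite inE => /predU1P[yx | //]; move: y_nbr; rewrite yx inE e_irr andbF.
clear IH lt_m sub_S no_ext.
case: s path_xs uniq_xs nbr_in_s => [|a s] /= path_xs uniq_xs nbr_in_s.
  rewrite eqxx leqn0 cards_eq0; apply/eqP/setP => y.
  by rewrite in_set0; apply/negbTE/negP => /nbr_in_s.
have -> : x != last a s by apply: contraTneq uniq_xs => ->; rewrite mem_last.
apply: leq_trans (_ : #|[set a]| <= 1); last by rewrite cards1.
apply/subset_leq_card/subsetP => y y_nbr.
rewrite inE; case/predU1P: (nbr_in_s y y_nbr) => [-> // | ys].
by move: y_nbr; rewrite inE (negPf (path_head_nonadj path_xs uniq_xs ys)) andbF.
Qed.

(* A leaf of S other than r, or r itself if it is isolated in S. *)
Lemma exists_leaf (S : {set T}) r :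
  S != set0 -> exists2 l, l \in S & #|nbrs e S l| <= (l != r).
Proof.
have path1 x : x \in S -> exists2 l, l \in S & #|nbrs e S l| <= (l != x).
  by move=> xS; apply: (leaf_at_path_end (s := [::])) => // z; rewrite inE => /eqP->.
move=> /set0Pn[x /path1[l lS leaf_l]]; have [/path1 // | rNS] := boolP (r \in S).
by exists l => //; apply: leq_trans leaf_l _; rewrite (memPn rNS l lS) leq_b1.
Qed.

Lemma leaf_cases (S : {set T}) l r : #|nbrs e S l| <= (l != r) ->
  nbrs e S l = set0 \/ l != r /\ exists p, nbrs e S l = [set p].
Proof.
move=> leaf_l; have [-> | ] := eqVneq (nbrs e S l) set0; first by left.
rewrite -cards_eq0 -lt0n => nbrs_l; right; split.
  by move: (leq_trans nbrs_l leaf_l); rewrite lt0b.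
by apply/cards1P; rewrite eqn_leq nbrs_l (leq_trans leaf_l) ?leq_b1.
Qed.

Record rooting (S : {set T}) r (parent : T -> option T) (depth : T -> nat) : Prop :=
  Rooting {
    parent_root : parent r = None;
    parent_in : forall v p, parent v = Some p -> p \in S;
    depth_parent : forall v p, parent v = Some p -> depth p < depth v;
    edge_parent : forall x y, x \in S -> y \in S -> e x y ->
      parent x = Some y \/ parent y = Some x }.

Lemma rooting_add_isolated S r l parent depth :
  nbrs e S l = set0 -> rooting (S :\ l) r parent depth ->
  rooting S r (fun v => if v == l then None else parent v) depth.
Proof.
move=> isolated [root_r par_in depth_par edge_par].
have nbr_l y : y \in S -> e l y = false by move/edge_nbrs->; rewrite isolated in_set0.
split.
- by case: eqP.
- by move=> v p; case: eqP => // _ /par_in/setD1P[].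
- by move=> v p; case: eqP => // _ /depth_par.
move=> x y xS yS exy; case: (eqVneq x l) => [xl | xl].
  by move: exy; rewrite xl nbr_l.
case: (eqVneq y l) => [yl | yl].
  by move: exy; rewrite yl e_sym nbr_l.
by apply: edge_par; rewrite // !inE ?xl ?yl.
Qed.

Lemma rooting_add_pendant S r l p parent depth :
  l != r -> nbrs e S l = [set p] -> rooting (S :\ l) r parent depth ->
  rooting S r (fun v => if v == l then Some p else parent v)
              (fun v => if v == l then (depth p).+1 else depth v).
Proof.
move=> lr pendant [root_r par_in depth_par edge_par].
have nbr_l y : y \in S -> e l y = (y == p) by move/edge_nbrs->; rewrite pendant inE.
have : p \in nbrs e S l by rewrite pendant set11.
rewrite inE => /andP[pS elp].
have pl : p != l by apply: contraTneq elp => ->; rewrite e_irr.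
split.
- by rewrite eq_sym (negPf lr).
- by move=> v q; case: eqP => [_ [<-] // | _ /par_in/setD1P[]].
- move=> v q; case: eqP => [_ [<-] | _ par_v]; first by rewrite (negPf pl).
  by have /setD1P[/negPf-> _] := par_in v q par_v; apply: depth_par.
move=> x y xS yS exy; case: (eqVneq x l) => [xl | xl].
  by left; move: exy; rewrite xl nbr_l // => /eqP->.
case: (eqVneq y l) => [yl | yl].
  by right; move: exy; rewrite yl e_sym nbr_l // => /eqP->.
by apply: edge_par; rewrite // !inE ?xl ?yl.
Qed.

Lemma exists_rooting S r : exists parent depth, rooting S r parent depth.
Proof.
have [n] := ubnP #|S|; elim: n S => // n IH S lt_S.
have [-> | S0] := eqVneq S set0.
  by exists (fun=> None), (fun=> 0); split=> // x y; rewrite inE.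
have [l lS /leaf_cases leaf_l] := exists_leaf r S0.
have [parent [depth rooted]] : exists parent depth, rooting (S :\ l) r parent depth.
  by apply: IH; rewrite (cardsD1 l S) lS in lt_S.
case: leaf_l => [isolated | [lr [p pendant]]].
  by exists (fun v => if v == l then None else parent v), depth; apply: rooting_add_isolated.
by do 2!eexists; apply: rooting_add_pendant pendant rooted.
Qed.

Lemma deeper_nbr r parent depth w a b :
  rooting [set: T] r parent depth -> e w a -> e w b -> a != b ->
  depth w < depth a \/ depth w < depth b.
Proof.
move=> [_ _ depth_par edge_par] ewa ewb neq_ab.
case: (edge_par w a (in_setT w) (in_setT a) ewa) => [par_w | /depth_par]; last by left.
case: (edge_par w b (in_setT w) (in_setT b) ewb) => [ | /depth_par]; last by right.
by rewrite par_w => -[eq_ab]; rewrite eq_ab eqxx in neq_ab.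
Qed.

(* A vertex of maximal depth among those covered by M1 :\: M2 has two distinct
   such neighbours, its partners in M1 and in M2, and one of them is deeper. *)
Lemma matching_sub_of_cover M1 M2 :
  matching e M1 -> matching e M2 -> cover M1 = cover M2 -> M1 \subset M2.
Proof.
move=> match1 match2 cover12; apply/subsetP => f0 f0M1; apply: contraT => f0NM2.
pose D := cover (M1 :\: M2).
have edge1 f : f \in M1 -> f \in edges e by apply/subsetP/matching_edges.
have edge2 f : f \in M2 -> f \in edges e by apply/subsetP/matching_edges.
have [x0 [y0 [_ f0E]]] := edgesP _ _ (edge1 f0 f0M1).
have x0D : x0 \in D by apply/bigcupP; exists f0; rewrite ?inE ?f0NM2 // f0E set21.
have [parent [depth rooted]] := exists_rooting [set: T] x0.
have [w /bigcupP[f1 /setDP[f1M1 f1NM2] wf1] w_max] := arg_maxnP depth x0D.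
have [a ewa f1E] := edge_other e_sym (edge1 f1 f1M1) wf1.
have [f2 f2M2 wf2] : exists2 f2, f2 \in M2 & w \in f2.
  by apply/bigcupP; rewrite -/(cover M2) -cover12; apply/bigcupP; exists f1.
have f2NM1 : f2 \notin M1.
  by apply: contra f1NM2 => f2M1; rewrite (matching_edge_eq match1 f1M1 f2M1 wf1 wf2).
have [b ewb f2E] := edge_other e_sym (edge2 f2 f2M2) wf2.
have aD : a \in D by apply/bigcupP; exists f1; rewrite ?inE ?f1M1 ?f1NM2 // f1E set22.
have bD : b \in D.
  have bf2 : b \in f2 by rewrite f2E set22.
  have [g gM1 bg] : exists2 g, g \in M1 & b \in g.
    by apply/bigcupP; rewrite -/(cover M1) cover12; apply/bigcupP; exists f2.
  apply/bigcupP; exists g => //; rewrite inE gM1 andbT.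
  by apply: contra f2NM1 => gM2; rewrite (matching_edge_eq match2 f2M2 gM2 bf2 bg).
have neq_ab : a != b by apply: contra f1NM2 => /eqP eq_ab; rewrite f1E eq_ab -f2E.
have := deeper_nbr rooted ewa ewb neq_ab.
by rewrite !ltnNge => -[] /negP[]; apply: w_max.
Qed.

Lemma edge_not_sub_cover f C : f \in edges e -> #|f :&: C| = 1 -> ~~ (f \subset C).
Proof.
case/edgesP=> x [y [exy ->]] one_end; apply/negP => /setIidPl xyC.
by move: one_end; rewrite xyC cards2; case: eqVneq exy => // ->; rewrite e_irr.
Qed.

(** * Building a tricoloring satisfying (iii) *)

Record good_tricoloring (S B : {set T}) (R : {set {set T}}) (G : {set T}) : Prop :=
  GoodTricoloring {
    good_edges : R \subset edges e;
    good_cover : B :|: ends R :|: G = S;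
    good_BG : [disjoint B & G];
    good_BR : [disjoint B & ends R];
    good_GR : [disjoint G & ends R];
    good_trivI : trivIset R;
    good_G_nbr : forall x y, e x y -> x \in G -> y \in S -> y \in B;
    good_B_nbr : forall b, b \in B -> 1 < #|nbrs e G b| }.

Lemma good_tricoloring_notin S B R G x : good_tricoloring S B R G -> x \notin S ->
  [/\ x \notin B, x \notin ends R & x \notin G].
Proof. by move=> [_ <- _ _ _ _ _ _]; rewrite !inE => /norP[/norP[-> ->] ->]. Qed.

Section Extend.
Variables (S B : {set T}) (R : {set {set T}}) (G : {set T}) (l : T).
Hypothesis lS : l \in S.

Lemma good_add_isolated : nbrs e S l = set0 ->
  good_tricoloring (S :\ l) B R G -> good_tricoloring S B R (l |: G).
Proof.
move=> isolated good; have [lB lR _] := good_tricoloring_notin good (negbT (setD11 l S)).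
case: good => sub_edges cover_S disjBG disjBR disjGR trivR G_nbr B_nbr.
have GS : G \subset S :\ l by rewrite -cover_S subsetUr.
have nbr_l y : y \in S -> e l y = false by move/edge_nbrs->; rewrite isolated in_set0.
split=> //.
- by rewrite setUCA cover_S setD1K.
- by rewrite disjoint_sym disjointsU disjoints1 lB disjoint_sym.
- by rewrite disjointsU disjoints1 lR.
- move=> x y exy /setU1P[xl | xG] yS; first by rewrite xl nbr_l in exy.
  apply: (G_nbr _ _ exy xG); rewrite !inE yS andbT.
  have /setD1P[_ xS] := subsetP GS x xG.
  by apply: contraTneq exy => ->; rewrite e_sym nbr_l.
move=> b bB; apply: leq_trans (B_nbr b bB) _.
by apply/subset_leq_card/nbrsS/subsetUr.
Qed.

Section Pendant.
Variable p : T.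
Hypotheses (pendant : nbrs e S l = [set p]) (good : good_tricoloring (S :\ l :\ p) B R G).

Let nbr_l y : y \in S -> e l y = (y == p).
Proof. by move/edge_nbrs->; rewrite pendant inE. Qed.

Let elp : e l p.
Proof. by have := set11 p; rewrite -pendant inE => /andP[]. Qed.

Let pSl : p \in S :\ l.
Proof.
have := set11 p; rewrite -pendant !inE => /andP[-> _]; rewrite andbT.
by apply: contraTneq elp => ->; rewrite e_irr.
Qed.

Let l_fresh : [/\ l \notin B, l \notin ends R & l \notin G].
Proof. by apply: good_tricoloring_notin good _; rewrite !inE eqxx !andbF. Qed.

Let p_fresh : [/\ p \notin B, p \notin ends R & p \notin G].
Proof. by apply: good_tricoloring_notin good _; rewrite !inE eqxx. Qed.

Let G_nbr_l x y : e x y -> x \in G -> y != l.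
Proof.
move=> exy xG; have : x \in S :\ l :\ p by rewrite -(good_cover good) !inE xG !orbT.
rewrite !inE => /and3P[xp _ xS].
by apply: contraNneq xp => yl; rewrite -nbr_l // -yl e_sym.
Qed.

Lemma good_add_pendant_B g : g \in G -> e p g -> good_tricoloring S (p |: B) R (l |: G).
Proof.
move=> gG epg; have [lB lR lG] := l_fresh; have [pB pR pG] := p_fresh.
have pl : p != l by case/setD1P: pSl.
case: good => sub_edges cover_S disjBG disjBR disjGR trivR G_nbr B_nbr.
split=> //.
- by rewrite -(setD1K lS) -(setD1K pSl) -cover_S setUCA -!setUA.
- rewrite disjointsU disjoints1 in_setU1 negb_or pl pG /=.
  by rewrite disjoint_sym disjointsU disjoints1 lB disjoint_sym.
- by rewrite disjointsU disjoints1 pR.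
- by rewrite disjointsU disjoints1 lR.
- move=> x y exy /setU1P[xl | xG] yS.
    by move: exy; rewrite xl nbr_l // => /eqP->; rewrite setU11.
  rewrite in_setU1; case: eqP => //= /eqP yp.
  by apply: (G_nbr _ _ exy xG); rewrite !inE yp (G_nbr_l exy xG).
move=> b /setU1P[-> | bB]; last first.
  by apply: leq_trans (B_nbr b bB) _; apply/subset_leq_card/nbrsS/subsetUr.
have gl : g != l by apply: contraNneq lG => <-.
apply: leq_trans (_ : 1 < #|[set g; l]|) _; first by rewrite cards2 gl.
apply/subset_leq_card/subsetP => y; rewrite !inE => /orP[] /eqP->.
  by rewrite gG epg orbT.
by rewrite eqxx e_sym elp.
Qed.

Lemma good_add_pendant_R : nbrs e G p = set0 -> good_tricoloring S B ([set l; p] |: R) G.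
Proof.
move=> p_noG; have [lB lR lG] := l_fresh; have [pB pR pG] := p_fresh.
case: good => sub_edges cover_S disjBG disjBR disjGR trivR G_nbr B_nbr.
have disj_lp (A : {set T}) : l \notin A -> p \notin A -> [disjoint [set l; p] & A].
  by move=> lA pA; rewrite disjointsU !disjoints1 lA.
have ends_lpR : ends ([set l; p] |: R) = [set l; p] :|: ends R := cover_setU1 R _.
split=> //.
- by apply/subsetP => f /setU1P[-> | /(subsetP sub_edges)] //; apply: mem_edges.
- rewrite ends_lpR -(setD1K lS) -(setD1K pSl) -cover_S.
  by rewrite -!setUA (setUCA B) (setUCA B [set p]).
- by rewrite ends_lpR disjoint_sym disjointsU disj_lp // disjoint_sym.
- by rewrite ends_lpR disjoint_sym disjointsU disj_lp // disjoint_sym.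
- by apply: trivIsetU; rewrite ?trivIset1 ?cover1 ?disj_lp.
move=> x y exy xG yS; apply: (G_nbr _ _ exy xG); rewrite !inE yS (G_nbr_l exy xG) !andbT.
apply: contraTneq xG => yp; have : x \notin nbrs e G p by rewrite p_noG in_set0.
by rewrite inE -yp e_sym exy andbT.
Qed.

End Pendant.
End Extend.

Lemma exists_good_tricoloring S : exists B R G, good_tricoloring S B R G.
Proof.
have [n] := ubnP #|S|; elim: n S => // n IH S lt_S.
have [-> | S0] := eqVneq S set0.
  have ends0 : ends (set0 : {set {set T}}) = set0 by rewrite /ends big_set0.
  exists set0, set0, set0; split; rewrite ?ends0 ?sub0set ?setU0 -?setI_eq0 ?set0I //.
  - by apply/trivIsetP => f; rewrite inE.
  - by move=> b; rewrite inE.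
have /set0Pn[x0 _] := S0; have [l lS /leaf_cases leaf_l] := exists_leaf x0 S0.
have lt_Sl : #|S :\ l| < n by rewrite (cardsD1 l S) lS in lt_S.
case: leaf_l => [isolated | [_ [p pendant]]].
  have [B [R [G good]]] := IH (S :\ l) lt_Sl.
  by exists B, R, (l |: G); apply: good_add_isolated.
have lt_Slp : #|S :\ l :\ p| < n.
  exact: leq_ltn_trans (subset_leq_card (subsetDl _ _)) lt_Sl.
have [B [R [G good]]] := IH (S :\ l :\ p) lt_Slp.
have [/exists_inP[g gG epg] | noG] := boolP [exists g in G, e p g].
  by exists (p |: B), R, (l |: G); apply: good_add_pendant_B epg.
exists B, ([set l; p] |: R), G; apply: good_add_pendant_R => //.
apply/setP => g; rewrite inE in_set0.
by apply: contraNF noG => /andP[gG epg]; apply/exists_inP; exists g.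
Qed.

(** * The tricoloring determines the backbones *)

Section Backbones.
Variables (B : {set T}) (R : {set {set T}}) (G : {set T}).
Hypothesis BRG : good_tricoloring [set: T] B R G.

Let k := #|B| + #|R|.

Lemma colour_cases x : [|| x \in B, x \in ends R | x \in G].
Proof. by have := in_setT x; rewrite -(good_cover BRG) !inE -orbA. Qed.

Lemma B_notin_ends x : x \in B -> x \notin ends R.
Proof. by move/(disjointFr (good_BR BRG)) => ->. Qed.

Lemma B_notin_G x : x \in B -> x \notin G.
Proof. by move/(disjointFr (good_BG BRG)) => ->. Qed.

Lemma G_notin_ends x : x \in G -> x \notin ends R.
Proof. by move/(disjointFr (good_GR BRG)) => ->. Qed.

Lemma G_nbr_B x y : e x y -> x \in G -> y \in B.
Proof. by move=> exy xG; apply: (good_G_nbr BRG exy xG); rewrite inE. Qed.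

Lemma mem_ends f x : f \in R -> x \in f -> x \in ends R.
Proof. by move=> fR xf; apply/bigcupP; exists f. Qed.

Lemma R_edge f : f \in R -> f \in edges e.
Proof. exact: subsetP (good_edges BRG) f. Qed.

Lemma matching_R : matching e R.
Proof. by rewrite matchingE (good_edges BRG) (good_trivI BRG). Qed.

Section Rooted.
Variables (r : T) (parent : T -> option T) (depth : T -> nat).
Hypothesis rooted : rooting [set: T] r parent depth.

Let edge_par x y : e x y -> parent x = Some y \/ parent y = Some x.
Proof. by apply: (edge_parent rooted); rewrite inE. Qed.

Lemma exists_green_child b : b \in B -> exists y, (y \in nbrs e G b) && (parent y == Some b).
Proof.
move=> bB; have /card_gt1P[y1 [y2 [y1G y2G neq_y]]] := good_B_nbr BRG bB.
have edge_b y : y \in nbrs e G b -> parent b = Some y \/ parent y = Some b.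
  by rewrite inE => /andP[_ /edge_par].
case: (edge_b y1 y1G) => [par_b1 | par_1]; last by exists y1; rewrite y1G par_1 /=.
case: (edge_b y2 y2G) => [par_b2 | par_2]; last by exists y2; rewrite y2G par_2 /=.
by move: neq_y; rewrite par_b1 in par_b2; case: par_b2 => ->; rewrite eqxx.
Qed.

Definition green_child b := odflt b [pick y in nbrs e G b | parent y == Some b].

Lemma green_childP b : b \in B ->
  [/\ green_child b \in G, e b (green_child b) & parent (green_child b) = Some b].
Proof.
move=> /exists_green_child ex_b; rewrite /green_child; case: pickP => [y | none].
  by rewrite inE => /andP[/andP[-> ->] /eqP->].
by case: ex_b => y; rewrite none.
Qed.

Definition child_edges := [set [set b; green_child b] | b in B].

Lemma trivIset_child_edges :
  trivIset child_edges /\ {in B &, injective (fun b => [set b; green_child b])}.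
Proof.
apply: trivIimset => [b1 b2 b1B b2B neq_b | ].
  have [c1G _ par_c1] := green_childP b1B; have [c2G _ par_c2] := green_childP b2B.
  rewrite disjoint_sym !disjointsU !disjoints1 !inE !negb_or neq_b /=.
  apply/and3P; split; first by apply: contraTneq c1G => <-; apply: B_notin_G.
    by apply: contraTneq c2G => ->; apply: B_notin_G.
  by apply: contra neq_b => /eqP eq_c; move: par_c2; rewrite eq_c par_c1 => -[->].
by apply/imsetP => -[b _ /setP/(_ b)]; rewrite set21 inE.
Qed.

Lemma matching_child_edges :
  [/\ matching e (R :|: child_edges), #|R :|: child_edges| = k
    & r \in G -> r \notin ends (R :|: child_edges)].
Proof.
have [trivP inj_P] := trivIset_child_edges.
have disj_RP : [disjoint ends R & cover child_edges].
  rewrite cover_imset; apply: bigcup_disjoint => b bB; have [cG _ _] := green_childP bB.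
  by rewrite disjoint_sym disjointsU !disjoints1 B_notin_ends ?G_notin_ends.
split.
- rewrite matchingE subUset (good_edges BRG) trivIsetU ?(good_trivI BRG) //= andbT.
  by apply/subsetP => _ /imsetP[b bB ->]; apply: mem_edges; case: (green_childP bB).
- have disj : [disjoint R & child_edges].
    apply/pred0P => f /=; apply/negbTE/andP => -[fR /imsetP[b bB fE]].
    by have := B_notin_ends bB; rewrite (mem_ends fR) // fE set21.
  by rewrite cardsU (disjoint_setI0 disj) cards0 subn0 card_in_imset // addnC.
move=> rG; rewrite /ends bigcup_setU inE negb_or G_notin_ends //=.
apply/bigcupP => -[_ /imsetP[b bB ->]]; rewrite !inE => /orP[] /eqP r_eq.
  by move: rG; rewrite r_eq (negPf (B_notin_G bB)).
by have [_ _] := green_childP bB; rewrite -r_eq (parent_root rooted).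
Qed.

Definition upper_ends := [set w | [exists c, (parent c == Some w) && ([set w; c] \in R)]].

Lemma upper_endsI c w : parent c = Some w -> [set w; c] \in R -> w \in upper_ends.
Proof. by move=> par_c wcR; rewrite inE; apply/existsP; exists c; rewrite par_c eqxx. Qed.

Lemma upper_ends_child c w :
  c \in ends R -> parent c = Some w -> [set w; c] \notin R -> c \in upper_ends.
Proof.
case/bigcupP=> f fR cf par_c wcNR; have [c' ecc' fE] := edge_other e_sym (R_edge fR) cf.
case: (edge_par ecc') => [par_c' | par_c'c]; last by apply: (upper_endsI par_c'c); rewrite -fE.
by move: wcNR; rewrite par_c' in par_c; case: par_c => <-; rewrite setUC -fE fR.
Qed.

Lemma card_upper_ends_edge f : f \in R -> #|f :&: upper_ends| <= 1.
Proof.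
move=> fR; have upper_other w w' : w \in f -> w' \in f -> w \in upper_ends -> w' != w ->
    parent w' = Some w.
  move=> wf w'f; rewrite inE => /existsP[c /andP[/eqP par_c wcR]] neq_w.
  have fE : [set w; c] = f := matching_edge_eq matching_R wcR fR (set21 w c) wf.
  by move: w'f; rewrite -fE !inE (negPf neq_w) => /eqP->.
apply/card_le1_eqP => w1 w2 /setIP[w1f w1X] /setIP[w2f w2X].
case: (eqVneq w2 w1) => // neq_21.
have par_2 := upper_other w1 w2 w1f w2f w1X neq_21.
have neq_12 : w1 != w2 by rewrite eq_sym.
have par_1 := upper_other w2 w1 w2f w1f w2X neq_12.
by have := ltn_trans (depth_parent rooted par_2) (depth_parent rooted par_1); rewrite ltnn.
Qed.

Lemma card_upper_ends : #|upper_ends| <= #|R|.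
Proof.
have sub_ends : upper_ends \subset ends R.
  apply/subsetP => w; rewrite inE => /existsP[c /andP[_ wcR]].
  by apply: (mem_ends wcR); rewrite set21.
rewrite -(setIidPr sub_ends) card_cover_setI ?(good_trivI BRG) // -sum1_card.
exact: leq_sum card_upper_ends_edge.
Qed.

Lemma vertex_cover_upper_ends : vertex_cover e (B :|: upper_ends).
Proof.
have upper_edge c w : c \in ends R -> parent c = Some w ->
    (c \in upper_ends) || (w \in upper_ends).
  move=> cR par_c; have [wcR | wcNR] := boolP ([set w; c] \in R).
    by rewrite (upper_endsI par_c wcR) orbT.
  by rewrite (upper_ends_child cR par_c wcNR).
apply/vertex_coverP => x y exy; rewrite !in_setU.
case/or3P: (colour_cases x) => [-> // | xR | xG]; last by rewrite (G_nbr_B exy xG) orbT.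
case/or3P: (colour_cases y) => [-> | yR | yG]; first by rewrite orbT.
  case: (edge_par exy) => [/(upper_edge x y xR) | /(upper_edge y x yR)] /orP[] ->;
    by rewrite ?orbT.
by rewrite e_sym in exy; rewrite (G_nbr_B exy yG).
Qed.

End Rooted.

Lemma exists_matching_avoiding r :
  exists M, [/\ matching e M, #|M| = k, R \subset M & r \in G -> r \notin ends M].
Proof.
have [parent [depth rooted]] := exists_rooting [set: T] r.
have [matchM cardM avoid_r] := matching_child_edges rooted.
by exists (R :|: child_edges parent); split=> //; apply: subsetUl.
Qed.

Lemma exists_cover_through u : exists C, [/\ vertex_cover e C, #|C| <= k, B \subset C,
  u \in ends R -> u \in C &
  forall v, v \in ends R -> e u v -> [set u; v] \notin R -> v \in C].
Proof.
have [parent [depth rooted]] := exists_rooting [set: T] u.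
have edge_par x y : e x y -> parent x = Some y \/ parent y = Some x.
  by apply: (edge_parent rooted); rewrite inE.
have root_u := parent_root rooted.
exists (B :|: upper_ends parent); split.
- exact: vertex_cover_upper_ends rooted.
- apply: leq_trans (leq_card_setU _ _).1 _.
  by rewrite leq_add2l (card_upper_ends rooted).
- exact: subsetUl.
- case/bigcupP=> f fR uf; have [u' euu' fE] := edge_other e_sym (R_edge fR) uf.
  case: (edge_par u u' euu') => [| par_u']; first by rewrite root_u.
  by rewrite inE (upper_endsI par_u') ?orbT // -fE.
move=> v vR euv uvNR; case: (edge_par u v euv) => [| par_v]; first by rewrite root_u.
by rewrite inE (upper_ends_child rooted vR par_v uvNR) orbT.
Qed.

(* T may be empty, and then no root is available. *)
Lemma exists_matching_k : exists2 M, matching e M & #|M| = k.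
Proof.
have [r _ | T0] := pickP (@predT T).
  by have [M [matchM cardM _ _]] := exists_matching_avoiding r; exists M.
exists set0; first by rewrite matchingE sub0set; apply/trivIsetP => f; rewrite inE.
suff [B0 R0] : B = set0 /\ R = set0 by rewrite /k B0 R0 !cards0.
split; apply/setP => x; first by have := T0 x.
by rewrite in_set0; apply/negbTE/negP => /R_edge/edgesP[y _]; have := T0 y.
Qed.

Lemma card_matching_le M : matching e M -> #|M| <= k.
Proof.
move=> matchM; have [-> | [f fM]] := set_0Vmem M; first by rewrite cards0.
have /edgesP[x _] := subsetP (matching_edges matchM) f fM.
have [C [coverC le_Ck _ _ _]] := exists_cover_through x.
exact: leq_trans (card_matching_le_cover matchM coverC) le_Ck.
Qed.

Lemma card_cover_ge C : vertex_cover e C -> k <= #|C|.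
Proof.
move=> coverC; have [M matchM <-] := exists_matching_k.
exact: card_matching_le_cover matchM coverC.
Qed.

Lemma max_matchingE M : max_matching e M = matching e M && (#|M| == k).
Proof.
apply/max_matchingP/andP => [[matchM maxM] | [matchM /eqP cardM]].
  split=> //; rewrite eqn_leq card_matching_le //.
  by have [M0 matchM0 <-] := exists_matching_k; apply: maxM.
by split=> // M' /card_matching_le; rewrite cardM.
Qed.

Lemma min_vertex_coverE C : min_vertex_cover e C = vertex_cover e C && (#|C| == k).
Proof.
apply/min_vertex_coverP/andP => [[coverC minC] | [coverC /eqP cardC]].
  split=> //; rewrite eqn_leq card_cover_ge // andbT.
  have [-> | [u _]] := set_0Vmem C; first by rewrite cards0.
  have [C' [coverC' le_C'k _ _ _]] := exists_cover_through u.
  exact: leq_trans (minC C' coverC') le_C'k.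
by split=> // C' /card_cover_ge; rewrite cardC.
Qed.

Lemma max_min_tight M C : max_matching e M -> min_vertex_cover e C ->
  C \subset ends M /\ {in M, forall f, #|f :&: C| = 1}.
Proof.
rewrite max_matchingE min_vertex_coverE => /andP[matchM /eqP cardM] /andP[coverC /eqP cardC].
by apply: (tight_matching_cover matchM coverC); rewrite cardM cardC.
Qed.

Lemma G_notin_min_cover g C : g \in G -> min_vertex_cover e C -> g \notin C.
Proof.
move=> gG minC; have [M [matchM cardM _ /(_ gG) gNM]] := exists_matching_avoiding g.
have maxM : max_matching e M by rewrite max_matchingE matchM cardM eqxx.
by apply: contra gNM; apply/subsetP; case: (max_min_tight maxM minC).
Qed.

Lemma B_sub_min_cover C : min_vertex_cover e C -> B \subset C.
Proof.
move=> minC; apply/subsetP => b bB.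
have /card_gt0P[y] : 0 < #|nbrs e G b| by apply: ltnW (good_B_nbr BRG bB).
rewrite inE => /andP[yG eby].
case/min_vertex_coverP: (minC) => /vertex_coverP/(_ b y eby) + _.
by rewrite (negPf (G_notin_min_cover yG minC)) orbF.
Qed.

Lemma min_cover_R_edge C f : min_vertex_cover e C -> f \in R -> #|f :&: C| = 1.
Proof.
move=> minC fR; have /edgesP[x _] := R_edge fR.
have [M [matchM cardM RM _]] := exists_matching_avoiding x.
have maxM : max_matching e M by rewrite max_matchingE matchM cardM eqxx.
by have [_] := max_min_tight maxM minC; apply; apply: (subsetP RM).
Qed.

Lemma min_cover_through u : exists2 C, min_vertex_cover e C & (u \in ends R -> u \in C).
Proof.
have [C [coverC le_Ck _ uC _]] := exists_cover_through u; exists C => //.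
by rewrite min_vertex_coverE coverC eqn_leq le_Ck card_cover_ge.
Qed.

Lemma min_cover_through_edge x y : e x y -> x \notin G -> y \notin G ->
  [set x; y] \notin R -> exists2 C, min_vertex_cover e C & [set x; y] \subset C.
Proof.
move=> exy xNG yNG xyNR; have [C [coverC le_Ck BC xC yC]] := exists_cover_through x.
have in_C z : z \notin G -> (z \in ends R -> z \in C) -> z \in C.
  move=> zNG zC; case/or3P: (colour_cases z) => [/(subsetP BC) | /zC | ] //.
  by rewrite (negPf zNG).
exists C; first by rewrite min_vertex_coverE coverC eqn_leq le_Ck card_cover_ge.
by apply/subsetP => z; rewrite !inE => /orP[] /eqP->; apply: in_C => // yR; apply: yC.
Qed.

Lemma min_cover_avoiding u : u \in ends R -> exists2 C, min_vertex_cover e C & u \notin C.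
Proof.
case/bigcupP=> f fR uf; have [u' euu' fE] := edge_other e_sym (R_edge fR) uf.
have u'f : u' \in f by rewrite fE set22.
have [C minC /(_ (mem_ends fR u'f)) u'C] := min_cover_through u'.
exists C => //; apply: contraTN euu' => uC.
have /card_le1_eqP/(_ u u') eq_uu' : #|f :&: C| <= 1 by rewrite min_cover_R_edge.
by rewrite -eq_uu' ?inE ?uf ?u'f ?uC ?u'C ?e_irr.
Qed.

(* Every end of R is matched by M to another end of R, so the edges of M inside
   ends R match ends R perfectly, just as R does. *)
Lemma R_sub_max_matching M : max_matching e M -> R \subset M.
Proof.
move=> maxM; have matchM : matching e M by move: maxM; rewrite max_matchingE => /andP[].
pose MR := [set f in M | f \subset ends R].
have MR_M : MR \subset M by apply/subsetP => f; rewrite inE => /andP[].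
have matchMR : matching e MR.
  rewrite matchingE (subset_trans MR_M (matching_edges matchM)).
  exact: trivIsetS MR_M (matching_trivIset matchM).
apply: subset_trans MR_M; apply: matching_sub_of_cover matching_R matchMR _.
apply/eqP; rewrite eqEsubset; apply/andP; split; last first.
  by apply/bigcupsP => f; rewrite inE => /andP[].
apply/subsetP => w wR; have [C minC /(_ wR) wC] := min_cover_through w.
have [/subsetP /(_ w wC) /bigcupP[f fM wf] one_end] := max_min_tight maxM minC.
have [z ewz fE] := edge_other e_sym (subsetP (matching_edges matchM) f fM) wf.
have zR : z \in ends R.
  case/or3P: (colour_cases z) => [zB | // | zG]; last first.
    by move: wR; rewrite e_sym in ewz; rewrite (negPf (B_notin_ends (G_nbr_B ewz zG))).
  have zC := subsetP (B_sub_min_cover minC) z zB.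
  have /card_le1_eqP/(_ w z) eq_wz : #|f :&: C| <= 1 by rewrite one_end.
  by move: ewz; rewrite -eq_wz ?inE ?wf ?wC ?zC ?fE ?set22 ?e_irr.
apply/bigcupP; exists f => //; rewrite inE fM fE.
by apply/subsetP => x; rewrite !inE => /orP[] /eqP->.
Qed.

Lemma pos_vertex_backboneE : pos_vertex_backbone e = B.
Proof.
apply/setP => v; rewrite inE; apply/forall_inP/idP => [inC | vB C minC]; last first.
  exact: subsetP (B_sub_min_cover minC) v vB.
case/or3P: (colour_cases v) => [// | vR | vG].
  by have [C minC vNC] := min_cover_avoiding vR; move: (inC C minC); rewrite (negPf vNC).
have [C minC _] := min_cover_through v.
by move: (inC C minC); rewrite (negPf (G_notin_min_cover vG minC)).
Qed.

Lemma neg_vertex_backboneE : neg_vertex_backbone e = G.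
Proof.
apply/setP => v; rewrite inE; apply/forall_inP/idP => [notC | vG C]; last first.
  exact: G_notin_min_cover.
have [C minC vR_C] := min_cover_through v; move: (notC C minC).
case/or3P: (colour_cases v) => [vB | /vR_C-> // | //].
by rewrite (subsetP (B_sub_min_cover minC) v vB).
Qed.

Lemma degenerateE v : degenerate e v = (v \in ends R).
Proof.
rewrite /degenerate pos_vertex_backboneE neg_vertex_backboneE.
case/or3P: (colour_cases v) => [vB | vR | vG].
- by rewrite vB (negPf (B_notin_ends vB)).
- rewrite vR; apply/andP; split; apply: contraTN vR.
    exact: B_notin_ends.
  exact: G_notin_ends.
- by rewrite vG andbF (negPf (G_notin_ends vG)).
Qed.

Lemma exclusive_edgesE : exclusive_edges e = R.
Proof.
apply/setP => f; rewrite inE; apply/idP/idP => [| fR]; last first.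
  rewrite R_edge //=; apply/andP; split.
    by apply/forall_inP => v vf; rewrite degenerateE (mem_ends fR).
  apply/forallP => C; apply/implyP => minC.
  exact: edge_not_sub_cover (R_edge fR) (min_cover_R_edge minC fR).
case/and3P=> /edgesP[x [y [exy f_xy]]] /forall_inP deg /forallP notC.
have notG z : z \in f -> z \notin G.
  by move/deg; rewrite degenerateE; apply: contraTN => /G_notin_ends.
apply: contraT => fNR.
have xNG : x \notin G by rewrite notG // f_xy set21.
have yNG : y \notin G by rewrite notG // f_xy set22.
have xyNR : [set x; y] \notin R by rewrite -f_xy.
have [C minC fC] := min_cover_through_edge exy xNG yNG xyNR.
by move: (notC C); rewrite minC f_xy fC.
Qed.

Lemma pos_edge_backboneE : pos_edge_backbone e = R.
Proof.
apply/setP => f; rewrite inE; apply/andP/idP => [[fE /forall_inP inM] | fR]; last first.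
  split; first exact: R_edge.
  by apply/forall_inP => M /R_sub_max_matching/subsetP; apply.
have [x [y [exy f_xy]]] := edgesP _ _ fE.
have notG z : z \in f -> z \notin G.
  move=> zf; apply/negP => zG; have [M [matchM cardM _ /(_ zG)]] := exists_matching_avoiding z.
  have maxM : max_matching e M by rewrite max_matchingE matchM cardM eqxx.
  by case/negP; apply/bigcupP; exists f => //; apply: inM.
apply: contraT => fNR.
have xNG : x \notin G by rewrite notG // f_xy set21.
have yNG : y \notin G by rewrite notG // f_xy set22.
have xyNR : [set x; y] \notin R by rewrite -f_xy.
have [C minC fC] := min_cover_through_edge exy xNG yNG xyNR.
have [M matchM cardM] := exists_matching_k.
have maxM : max_matching e M by rewrite max_matchingE matchM cardM eqxx.
have [_ one_end] := max_min_tight maxM minC.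
by move: (edge_not_sub_cover fE (one_end f (inM M maxM))); rewrite f_xy fC.
Qed.

Lemma optional_verticesE : optional_vertices e = G.
Proof.
apply/setP => v; rewrite inE; apply/existsP/idP => [[M /andP[maxM /forall_inP vNM]] | vG].
  apply: contraT => vNG; have [C minC vC] : exists2 C, min_vertex_cover e C & v \in C.
    have [C minC vR_C] := min_cover_through v; exists C => //.
    case/or3P: (colour_cases v) => [/(subsetP (B_sub_min_cover minC)) | /vR_C | vG] //.
    by rewrite vG in vNG.
  have [/subsetP/(_ v vC)/bigcupP[f fM vf] _] := max_min_tight maxM minC.
  by move: (vNM f fM); rewrite vf.
have [M [matchM cardM _ /(_ vG) vNM]] := exists_matching_avoiding v.
exists M; rewrite max_matchingE matchM cardM eqxx /=.
by apply/forall_inP => f fM; apply: contra vNM => vf; apply/bigcupP; exists f.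
Qed.

Lemma unavoidable_verticesE : unavoidable_vertices e = B.
Proof.
apply/setP => v; rewrite inE.
have -> : optional e v = (v \in G) by rewrite -optional_verticesE inE.
have -> : [exists f in pos_edge_backbone e, v \in f] = (v \in ends R).
  by rewrite pos_edge_backboneE; apply/exists_inP/bigcupP => -[f]; exists f.
case/or3P: (colour_cases v) => [vB | vR | vG].
- by rewrite vB (negPf (B_notin_G vB)) (negPf (B_notin_ends vB)).
- by rewrite vR andbF; apply/esym/negbTE; apply: contraTN vR; apply: B_notin_ends.
- by rewrite vG; apply/esym/negbTE; apply: contraTN vG; apply: B_notin_G.
Qed.

Lemma backbonesE :
  (pos_vertex_backbone e, exclusive_edges e, neg_vertex_backbone e) = (B, R, G) /\
  (unavoidable_vertices e, pos_edge_backbone e, optional_vertices e) = (B, R, G).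
Proof.
rewrite pos_vertex_backboneE exclusive_edgesE neg_vertex_backboneE.
by rewrite unavoidable_verticesE pos_edge_backboneE optional_verticesE.
Qed.

End Backbones.

Lemma good_tricoloring_setTP B R G :
  good_tricoloring [set: T] B R G <-> tricoloring e B R G /\ cond_iii e B R G.
Proof.
split=> [[sub_edges cover_T BG BR GR trivR G_nbr B_nbr] | ].
  split; first by do !split.
  split; first by move=> f g fR gR; apply: (trivIsetP trivR).
  by split=> // x y exy xG; apply: G_nbr exy xG _; rewrite inE.
move=> [[sub_edges [BG [BR [GR cover_T]]]] [disjR [G_nbr B_nbr]]].
by split=> // [|x y exy xG _]; [apply/trivIsetP | apply: G_nbr exy xG].
Qed.

End Forest.

Theorem theorem1 (T : finType) (e : rel T)
    (e_sym : symmetric e) (e_irr : irreflexive e) (tree : is_tree e) :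
  tricoloring e (pos_vertex_backbone e) (exclusive_edges e) (neg_vertex_backbone e) /\
  tricoloring e (unavoidable_vertices e) (pos_edge_backbone e) (optional_vertices e) /\
  (exists! t : {set T} * {set {set T}} * {set T},
      tricoloring e t.1.1 t.1.2 t.2 /\ cond_iii e t.1.1 t.1.2 t.2) /\
  (forall (B : {set T}) (R : {set {set T}}) (G : {set T}),
      tricoloring e B R G -> cond_iii e B R G ->
      (B, R, G) = (pos_vertex_backbone e, exclusive_edges e, neg_vertex_backbone e)) /\
  (pos_vertex_backbone e, exclusive_edges e, neg_vertex_backbone e)
    = (unavoidable_vertices e, pos_edge_backbone e, optional_vertices e).
Proof.
case: tree => _ [_ acyclic]; have charE := @backbonesE T e e_sym e_irr acyclic.
have [B [R [G BRG]]] := exists_good_tricoloring e_sym e_irr acyclic [set: T].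
have [tri iii] := (good_tricoloring_setTP e B R G).1 BRG.
have unique B' R' G' :
    tricoloring e B' R' G' -> cond_iii e B' R' G' -> (B', R', G') = (B, R, G).
  move=> tri' iii'; have BRG' := (good_tricoloring_setTP e B' R' G').2 (conj tri' iii').
  by rewrite -(charE _ _ _ BRG').1 (charE _ _ _ BRG).1.
have [[-> -> ->] [-> -> ->]] := charE _ _ _ BRG.
split=> //; split=> //; split; last by split=> // B' R' G' /unique; apply.
exists (B, R, G); split=> // -[[B' R'] G'] /= [tri' iii'].
by rewrite (unique B' R' G' tri' iii').
Qed.
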